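(* Let $R$ be a finitely generated integral $\mathbb{K}$-algebra with an effective, pointed grading by a finitely generated abelian group $K$, let $(\pi,\mathrm{id}_K)\colon S=\mathbb{K}[T_1,\dots,T_r]\to R$ be a minimal presentation, $I:=\ker\pi$, $G:=\operatorname{Aut}_K(S)$, $W:=\bigoplus_{u\in\Omega_I}S_u$ and $I_W:=I\cap W$. Then $I_W$ generates the ideal $I$, and $$\operatorname{Stab}_I(G)=\operatorname{Stab}_{I_W}(G)=\{g\in G;\ g\cdot I_W=I_W\}.$$
   Context: $\mathbb{K}$ algebraically closed of characteristic zero. $\operatorname{Aut}_K(S)$ is the group of graded automorphisms $(\varphi,\psi)$ of $S$, acting by $f\mapsto\varphi(f)$; $\operatorname{Stab}_N(G)=\{g\in G;\ g\cdot N=N\}$. Effective/pointed: the weight monoid $\omega(R)=\{w;R_w\ne0\}$ generates $K$, $R_0=\mathbb{K}$ and the cone generated by $\omega(R)$ in $K\otimes\mathbb{Q}$ contains no line. Minimal presentation: graded epimorphism $(\pi,\kappa)$ from a $K$-graded polynomial ring with homogeneous variables, $\kappa$ a group isomorphism, $\ker\pi\subseteq\langle T_1,\dots,T_r\rangle^2$. $w'\le w$ iff $w-w'\in\omega(S)$; $\Omega_I:=\{w\in K;\ I_w\not\subseteq I_{<w}\}$ with $I_{<w}$ the ideal of $S$ generated by all $I_{w'}=I\cap S_{w'}$, $w'<w$. *)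

From HB Require Import structures.
From mathcomp Require Import all_boot all_order all_algebra.
From mathcomp Require Import mpoly.
Set Implicit Arguments. Unset Strict Implicit. Unset Printing Implicit Defensive.
Import GRing.Theory.
Local Open Scope ring_scope.

Section Grading.
Variables (F : closedFieldType) (K : zmodType) (r : nat) (deg : 'I_r -> K).

Local Notation PS := ({mpoly F[r]}).

Definition kdeg (m : 'X_{1..r}) : K := \sum_(i < r) deg i *+ m i.

(* f lies in the homogeneous component S_w (0 lies in every S_w) *)
Definition khomog (w : K) (f : PS) : Prop := forall m, m \in msupp f -> kdeg m = w.

Definition fg_group : Prop :=
  exists s : seq K, forall x : K, exists c : seq int,
    x = \sum_(i < size s) s`_i *~ c`_i.

Definition is_ideal (I : PS -> Prop) : Prop :=
  [/\ I 0, (forall f g, I f -> I g -> I (f + g)) & (forall f g, I g -> I (f * g))].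

Definition is_prime_ideal (I : PS -> Prop) : Prop :=
  [/\ is_ideal I, ~ I 1 & forall f g, I (f * g) -> I f \/ I g].

Definition gen_ideal (A : PS -> Prop) (f : PS) : Prop :=
  exists s : seq (PS * PS), (forall p, p \in s -> A p.2) /\
    f = \sum_(p <- s) p.1 * p.2.

Definition homog_ideal (I : PS -> Prop) : Prop :=
  forall f, I f -> forall w, I (\sum_(m <- msupp f | kdeg m == w) f@_m *: 'X_[m]).

Definition in_irrel_sq (f : PS) : Prop :=
  exists c : 'I_r -> 'I_r -> PS, f = \sum_(i < r) \sum_(j < r) c i j * 'X_i * 'X_j.

(* weight monoid of R = S/I : w with R_w <> 0 *)
Definition omegaR (I : PS -> Prop) (w : K) : Prop := exists f, khomog w f /\ ~ I f.

Definition omegaS (w : K) : Prop := exists f : PS, khomog w f /\ f != 0.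

(* x (x) 1 in K (x) Q lies in the cone generated by a set A of weights:
   m x = sum a_i w_i in K (x) Q with m > 0, a_i in N, w_i in A *)
Definition in_cone (A : K -> Prop) (x : K) : Prop :=
  exists (m : nat) (s : seq (nat * K)), (0 < m)%N /\ (forall p, p \in s -> A p.2) /\
    exists k : nat, (0 < k)%N /\
      (x *+ m - \sum_(p <- s) p.2 *+ p.1) *+ k = 0.

Definition torsion (x : K) : Prop := exists k : nat, (0 < k)%N /\ x *+ k = 0.

Definition effective_pointed (I : PS -> Prop) : Prop :=
  [/\ (forall x : K, exists s : seq (int * K), (forall p, p \in s -> omegaR I p.2) /\
          x = \sum_(p <- s) p.2 *~ p.1),
      (forall f, khomog 0 f -> exists c : F, I (f - c%:MP))
    & (forall x : K, in_cone (omegaR I) x -> in_cone (omegaR I) (- x) -> torsion x)].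

Definition wle (w' w : K) : Prop := omegaS (w - w').
Definition wlt (w' w : K) : Prop := wle w' w /\ w' <> w.

Definition Icomp (I : PS -> Prop) (w : K) (f : PS) : Prop := I f /\ khomog w f.

Definition Ilt (I : PS -> Prop) (w : K) : PS -> Prop :=
  gen_ideal (fun f => exists w', wlt w' w /\ Icomp I w' f).

Definition OmegaI (I : PS -> Prop) (w : K) : Prop :=
  exists f, Icomp I w f /\ ~ Ilt I w f.

Definition inW (I : PS -> Prop) (f : PS) : Prop :=
  exists s : seq PS, (forall g, g \in s -> exists u, OmegaI I u /\ khomog u g) /\
    f = \sum_(g <- s) g.

Definition IW (I : PS -> Prop) (f : PS) : Prop := I f /\ inW I f.

Definition graded_aut (phi : PS -> PS) (psi : K -> K) : Prop :=
  [/\ [/\ phi 1 = 1, (forall f g, phi (f + g) = phi f + phi g),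
         (forall f g, phi (f * g) = phi f * phi g),
         (forall (c : F) f, phi (c *: f) = c *: phi f) & bijective phi],
      (forall x y, psi (x + y) = psi x + psi y) /\ bijective psi
    & forall w f, khomog (psi w) f <-> exists g, khomog w g /\ phi g = f].

Definition stabilizes (phi : PS -> PS) (N : PS -> Prop) : Prop :=
  forall f, N f <-> exists g, N g /\ phi g = f.

End Grading.

From HB Require Import structures.
From mathcomp Require Import all_boot all_order all_algebra.
From mathcomp Require Import mpoly.
From Stdlib Require Import Classical.
Import GRing.Theory.
Local Open Scope ring_scope.
Set Implicit Arguments. Unset Strict Implicit. Unset Printing Implicit Defensive.

(* Every homogeneous [f] in [I_w] lies in the ideal generated by [I_W]: either
   [f] is not in [I_{<w}], so [w] is in [Omega_I] and [f] is in [I_W], or [f] is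
   a combination of elements of [I_{w'}] with [w' < w].  This descent terminates
   because pointedness forces every degree-0 monomial to be [1], so the monomials
   of a given degree form an antichain for divisibility and have bounded total
   degree, which strictly drops when passing from [w] to [w' < w].
   A graded automorphism [(g, psi)] with [g I = I] maps [I_{<w}] into
   [I_{<psi w}], and so does its inverse; hence [g] maps [Omega_I] and [I_W]
   into themselves.  Conversely, stabilizing [I_W] stabilizes the ideal it
   generates, namely [I]. *)

Lemma additive_fun0 (U V : zmodType) (f : U -> V) :
  (forall x y, f (x + y) = f x + f y) -> f 0 = 0.
Proof. by move=> fD; apply: (@addrI _ (f 0)); rewrite -fD !addr0. Qed.

Lemma additive_funN (U V : zmodType) (f : U -> V) :
  (forall x y, f (x + y) = f x + f y) -> forall x, f (- x) = - f x.
Proof.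
by move=> fD x; apply/eqP; rewrite -addr_eq0 addrC -fD subrr (additive_fun0 fD).
Qed.

Lemma fin_uniform_bound (T : finType) (P : T -> nat -> Prop) :
  (forall x n n', P x n -> (n <= n')%N -> P x n') ->
  (forall x, exists n, P x n) -> exists n, forall x, P x n.
Proof.
move=> Pmono Pex.
suff [n Pn] : exists n, forall x, x \in enum T -> P x n.
  by exists n => x; apply: Pn; rewrite mem_enum.
elim: (enum T) => [|y s [n Pn]]; first by exists 0%N.
have [ny Py] := Pex y.
exists (maxn n ny) => x; rewrite inE => /predU1P [->|xs].
  exact: Pmono Py (leq_maxr _ _).
exact: Pmono (Pn x xs) (leq_maxl _ _).
Qed.

Section Antichains.
Variable r : nat.
Implicit Types (A : 'X_{1..r} -> Prop) (J : {set 'I_r}).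

Lemma mnm_le_mdeg (m : 'X_{1..r}) i : (m i <= mdeg m)%N.
Proof. by rewrite mdegE (bigD1 i) //= leq_addr. Qed.

Definition mnm_antichain A := forall a b, A a -> A b -> (a <= b)%MM -> a = b.

(* Induction on the number of coordinates along which the elements of [A] may
   differ: an element other than a fixed [a0] is strictly below [a0] at some
   coordinate [i], and fixing the value at [i] removes [i] from [J]. *)
Lemma antichain_bounded_off k J A :
  (#|J| <= k)%N ->
  (forall a b, A a -> A b -> forall j, j \notin J -> a j = b j) ->
  mnm_antichain A ->
  exists n, forall a, A a -> forall j, (a j <= n)%N.
Proof.
elim: k J A => [|k IH] J A cardJ Aoff Aanti;
  (have [[a0 Aa0]|noA] := classic (exists a, A a);
   last by exists 0%N => a Aa; case: noA; exists a).
  exists (mdeg a0) => a Aa j.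
  suff -> : a = a0 by apply: mnm_le_mdeg.
  apply/mnmP => i; apply: Aoff => //.
  by move: cardJ; rewrite leqn0 cards_eq0 => /eqP ->; rewrite inE.
pose N := (mdeg a0).+1.
pose P (ic : 'I_r * 'I_N) n := forall b, A b -> b ic.1 = ic.2 :> nat ->
  (ic.2 < a0 ic.1)%N -> forall j, (b j <= n)%N.
have [n Pn] : exists n, forall ic, P ic n.
  apply: fin_uniform_bound => [[i c] n n' Pn le b Ab bi lt j|[i c]].
    exact: leq_trans (Pn b Ab bi lt j) le.
  have [iJ|iNJ] := boolP (i \in J); last first.
    by exists 0%N => b Ab /= bi; rewrite -bi (Aoff b a0) ?ltnn.
  have [|||n Hn] := IH (J :\ i) (fun b => A b /\ b i = c).
  - by move: cardJ; rewrite (cardsD1 i) iJ.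
  - move=> a b [Aa ai] [Ab bi] j; rewrite in_setD1 negb_and negbK.
    by case/predU1P => [->|jJ]; [rewrite ai bi | apply: Aoff].
  - by move=> a b [Aa _] [Ab _]; apply: Aanti.
  by exists n => b Ab bi _; apply: Hn.
exists (maxn n (mdeg a0)) => a Aa j.
have [/forallP a0_le_a|/forallPn [i]] := boolP [forall i, (a0 i <= a i)%N].
  have <- : a0 = a by apply/Aanti/mnm_lepP.
  by rewrite leq_max mnm_le_mdeg orbT.
rewrite -ltnNge => lt.
have ltN : (a i < N)%N by rewrite ltnS (leq_trans (ltnW lt)) ?mnm_le_mdeg.
by rewrite leq_max (Pn (i, Ordinal ltN) a Aa erefl lt j).
Qed.

Lemma antichain_mdeg_bounded A :
  mnm_antichain A -> exists n, forall a, A a -> (mdeg a < n)%N.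
Proof.
move=> Aanti; have [|||n Hn] := @antichain_bounded_off #|'I_r| setT A.
- by rewrite cardsT.
- by move=> a b _ _ j; rewrite inE.
- exact: Aanti.
exists (\sum_(i < r) n).+1 => a Aa; rewrite ltnS mdegE.
by apply: leq_sum => i _; apply: Hn.
Qed.

End Antichains.

Section Degrees.
Variables (K : zmodType) (r : nat) (deg : 'I_r -> K).

Lemma kdeg0 : kdeg deg 0%MM = 0.
Proof. by rewrite /kdeg big1 // => i _; rewrite mnm0E mulr0n. Qed.

Lemma kdegD m1 m2 : kdeg deg (m1 + m2)%MM = kdeg deg m1 + kdeg deg m2.
Proof. by rewrite /kdeg -big_split; apply: eq_bigr => i _; rewrite mnmDE mulrnDr. Qed.

Lemma kdeg_fiber_bounded : (forall u, kdeg deg u = 0 -> u = 0%MM) ->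
  forall w, exists n, forall m, kdeg deg m = w -> (mdeg m < n)%N.
Proof.
move=> kdeg_eq0 w; apply: antichain_mdeg_bounded => a b ka kb /submK ba.
have := kdegD (b - a) a; rewrite ba ka kb -{1}[w]add0r => /addIr/esym/kdeg_eq0.
by move=> b_a0; rewrite -ba b_a0 add0m.
Qed.

End Degrees.

Section Ideals.
Variables (F : closedFieldType) (r : nat).
Implicit Types (A B I : {mpoly F[r]} -> Prop) (f g : {mpoly F[r]}).

Lemma gen_ideal_base A f : A f -> gen_ideal A f.
Proof.
move=> Af; exists [:: (1, f)]; split; last by rewrite big_seq1 mul1r.
by move=> p; rewrite inE => /eqP ->.
Qed.

Lemma gen_ideal0 A : gen_ideal A 0.
Proof. by exists [::]; split => //; rewrite big_nil. Qed.

Lemma gen_idealD A f g : gen_ideal A f -> gen_ideal A g -> gen_ideal A (f + g).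
Proof.
move=> [s [sA ->]] [t [tA ->]]; exists (s ++ t); split; last by rewrite big_cat.
by move=> p; rewrite mem_cat => /orP [/sA|/tA].
Qed.

Lemma gen_idealMl A a f : gen_ideal A f -> gen_ideal A (a * f).
Proof.
move=> [s [sA ->]]; exists [seq (a * p.1, p.2) | p <- s]; split.
  by move=> _ /mapP [p ps ->] /=; apply: sA.
by rewrite big_map mulr_sumr; apply: eq_bigr => p _; rewrite mulrA.
Qed.

Lemma gen_ideal_sum A (T : Type) (s : seq T) (G : T -> {mpoly F[r]}) :
  (forall x, gen_ideal A (G x)) -> gen_ideal A (\sum_(x <- s) G x).
Proof.
move=> AG; elim: s => [|x s IH]; rewrite ?big_nil ?big_cons.
  exact: gen_ideal0.
exact: gen_idealD.
Qed.

Lemma gen_ideal_gen A B f :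
  (forall g, A g -> gen_ideal B g) -> gen_ideal A f -> gen_ideal B f.
Proof.
move=> AB [s [sA ->]]; rewrite big_seq.
elim/big_ind: _ => [|g h|p ps]; [exact: gen_ideal0 | exact: gen_idealD |].
exact/gen_idealMl/AB/sA.
Qed.

Lemma gen_ideal_min I A f :
  is_ideal I -> (forall g, A g -> I g) -> gen_ideal A f -> I f.
Proof.
move=> [I0 ID IM] AI [s [sA ->]]; rewrite big_seq.
by elim/big_ind: _ => // p /sA/AI; apply: IM.
Qed.

Lemma gen_ideal_morph (phi : {mpoly F[r]} -> {mpoly F[r]}) A B f :
  (forall g h, phi (g + h) = phi g + phi h) ->
  (forall g h, phi (g * h) = phi g * phi h) ->
  {homo phi : g / A g >-> B g} -> gen_ideal A f -> gen_ideal B (phi f).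
Proof.
move=> phiD phiM AB [s [sA ->]]; exists [seq (phi p.1, phi p.2) | p <- s]; split.
  by move=> _ /mapP [p ps ->] /=; apply/AB/sA.
rewrite big_map (big_morph phi phiD (additive_fun0 phiD)).
by apply: eq_bigr => p _; apply: phiM.
Qed.

Lemma prime_ideal_prod I (T : Type) (s : seq T) (G : T -> {mpoly F[r]}) :
  is_prime_ideal I -> I (\prod_(x <- s) G x) -> exists x, I (G x).
Proof.
move=> [_ nI1 Iprime]; elim: s => [|x s IH]; first by rewrite big_nil.
by rewrite big_cons => /Iprime [Ix|/IH //]; exists x.
Qed.

Lemma prime_ideal_exp I f k : is_prime_ideal I -> I (f ^+ k) -> I f.
Proof.
move=> [_ nI1 Iprime]; elim: k => [|k IH]; first by rewrite expr0.
by rewrite exprS => /Iprime [|/IH].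
Qed.

Lemma prime_idealX I (u : 'X_{1..r}) :
  is_prime_ideal I -> I 'X_[u] -> exists i, I 'X_i.
Proof.
move=> Iprime; rewrite mpolyXE_id => /(prime_ideal_prod Iprime) [i].
by move/(prime_ideal_exp Iprime); exists i.
Qed.

Lemma irrel_sq_meval0 f : in_irrel_sq f -> f.@[fun=> 0] = 0.
Proof.
move=> [c ->]; rewrite raddf_sum big1 // => i _ /=.
by rewrite raddf_sum big1 // => j _ /=; rewrite !mevalM !mevalXU /= !mulr0.
Qed.

Lemma irrel_sq_mderiv_meval0 i f : in_irrel_sq f -> (f^`M(i)).@[fun=> 0] = 0.
Proof.
move=> [c ->]; have mderiv_sum := big_morph _ (@mderivD _ _ i) (mderiv0 _ i).
rewrite mderiv_sum raddf_sum big1 // => j _ /=.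
rewrite mderiv_sum raddf_sum big1 // => k _ /=.
by rewrite !mderivM !mevalD !mevalM !mevalXU /= !(mulr0, mul0r, addr0).
Qed.

Lemma irrel_sq_X i : ~ in_irrel_sq ('X_i : {mpoly F[r]}).
Proof.
move/(irrel_sq_mderiv_meval0 i)/eqP; rewrite mderivX mnm1E eqxx scale1r.
have -> : (U_(i) - U_(i))%MM = 0%MM by apply/mnmP => j; rewrite mnmBE subnn mnm0E.
by rewrite mpolyX0 meval1 oner_eq0.
Qed.

End Ideals.

Section Components.
Variables (F : closedFieldType) (K : zmodType) (r : nat) (deg : 'I_r -> K).
Implicit Types (f : {mpoly F[r]}).

Definition kcomp w f := \sum_(m <- msupp f | kdeg deg m == w) f@_m *: 'X_[m].

Lemma kcomp_homog w f : khomog deg w (kcomp w f).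
Proof.
move=> m; apply: contraTeq => mw; rewrite mcoeff_msupp negbK raddf_sum /=.
rewrite big1 // => m' /eqP m'w; rewrite mcoeffZ mcoeffX.
by case: eqP => [mm'|_]; [move: mw; rewrite -mm' m'w eqxx | rewrite mulr0].
Qed.

Lemma kcomp_sum f : f = \sum_(w <- undup (map (kdeg deg) (msupp f))) kcomp w f.
Proof.
rewrite {1}(mpolyE f) (exchange_big_dep xpredT) //=.
apply: eq_big_seq => m mf; rewrite (eq_bigl (pred1 (kdeg deg m))) => [|w]; last first.
  by rewrite /= eq_sym.
by rewrite -big_filter filter_pred1_uniq ?undup_uniq ?mem_undup ?map_f // big_seq1.
Qed.

(* A nonzero element of [S_{w - w'}] has a nonconstant monomial [mu], and [m]
   of degree [w'] yields [m + mu] of degree [w]. *)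
Lemma wlt_mdeg_bound w' w n : wlt F deg w' w ->
  (forall m, kdeg deg m = w -> (mdeg m < n.+1)%N) ->
  forall m, kdeg deg m = w' -> (mdeg m < n)%N.
Proof.
move=> [[h [hh hn]] w'w] wbound m mw'.
have kmu := hh _ (mlead_supp hn); set mu := mlead h in kmu.
have mu0 : mu != 0%MM.
  apply: contra_notN w'w => /eqP mu0; move: kmu.
  by rewrite mu0 kdeg0 => /eqP; rewrite eq_sym subr_eq0 => /eqP.
have := wbound (m + mu)%MM; rewrite kdegD mw' kmu addrC subrK mdegD => /(_ erefl).
rewrite ltnS; apply: leq_trans.
by rewrite -[X in (X < _)%N]addn0 ltn_add2l lt0n mdeg_eq0.
Qed.


End Components.

Section Pointed.
Variables (F : closedFieldType) (K : zmodType) (r : nat) (deg : 'I_r -> K).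
Variable I : {mpoly F[r]} -> Prop.
Hypotheses (Iprime : is_prime_ideal I) (Ieff : effective_pointed deg I).
Hypothesis Iirrel : forall f, I f -> in_irrel_sq f.

(* [T^u] is homogeneous of degree 0, so [R_0 = F] puts [T^u - c] in [I]; as
   [I] lies in the square of the irrelevant ideal, [c = 0] and [I] contains
   some variable [T_i], which is not in that square. *)
Lemma pointed_kdeg_eq0 u : kdeg deg u = 0 -> u = 0%MM.
Proof.
move=> ku; apply/eqP; apply: contraT => u_neq0.
have [i ui] : exists i, u i != 0%N.
  apply/existsP; apply: contraR u_neq0 => /existsPn u0.
  by apply/eqP/mnmP => i; rewrite mnm0E; apply/eqP/negbNE.
have [_ Iconst _] := Ieff.
have [c Ic] : exists c, I ('X_[u] - c%:MP).
  by apply: Iconst => m; rewrite msuppX inE => /eqP ->.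
have c0 : c = 0.
  have := irrel_sq_meval0 (Iirrel Ic); rewrite mevalB mevalX mevalC.
  rewrite (bigD1 i) //= expr0n (negbTE ui) mul0r sub0r => /eqP.
  by rewrite oppr_eq0 => /eqP.
move: Ic; rewrite c0 subr0 => /(prime_idealX Iprime) [j /Iirrel].
by move/irrel_sq_X.
Qed.

End Pointed.

Section GeneratedByIW.
Variables (F : closedFieldType) (K : zmodType) (r : nat) (deg : 'I_r -> K).
Variable I : {mpoly F[r]} -> Prop.
Hypotheses (Iideal : is_ideal I) (Ihomog : homog_ideal deg I).
Hypothesis kdeg_fiber : forall w, exists n, forall m, kdeg deg m = w -> (mdeg m < n)%N.

Lemma Icomp_gen_IW w f : Icomp deg I w f -> gen_ideal (IW deg I) f.
Proof.
have [n] := kdeg_fiber w; elim: n w f => [|n IH] w f wbound [If fw].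
  suff -> : f = 0 by apply: gen_ideal0.
  by apply/eqP; apply: contraT => /mlead_supp/fw/wbound.
have [f_lt|f_nlt] := classic (Ilt deg I w f); last first.
  apply: gen_ideal_base; split=> //; exists [:: f]; split; last by rewrite big_seq1.
  by move=> g; rewrite inE => /eqP ->; exists w; split=> //; exists f.
apply: gen_ideal_gen f_lt => g [w' [w'w gw']].
exact: IH (wlt_mdeg_bound w'w wbound) gw'.
Qed.

Lemma gen_IW f : I f <-> gen_ideal (IW deg I) f.
Proof.
split=> [If|]; last by apply: gen_ideal_min => // g [].
rewrite (kcomp_sum deg f); apply: gen_ideal_sum => w.
by apply: Icomp_gen_IW; split; [apply: Ihomog | apply: kcomp_homog].
Qed.

End GeneratedByIW.

Section GradedAutomorphisms.
Variables (F : closedFieldType) (K : zmodType) (r : nat) (deg : 'I_r -> K).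
Implicit Types (phi : {mpoly F[r]} -> {mpoly F[r]}) (psi : K -> K).
Implicit Types (N A B : {mpoly F[r]} -> Prop).

Lemma stabilizes_homo phi phi' N : cancel phi phi' -> cancel phi' phi ->
  stabilizes phi N <-> {homo phi : f / N f} /\ {homo phi' : f / N f}.
Proof.
move=> phiK phi'K; split=> [phiN | [phiN phi'N] f].
  split=> f Nf; first by apply/phiN; exists f.
  by have /phiN [g [Ng <-]] := Nf; rewrite phiK.
split=> [Nf | [g [Ng <-]]]; last exact: phiN.
by exists (phi' f); split; [apply: phi'N | rewrite phi'K].
Qed.

Lemma graded_aut_inv phi psi : graded_aut deg phi psi ->
  exists phi' psi', [/\ graded_aut deg phi' psi',
    cancel phi phi', cancel phi' phi, cancel psi psi' & cancel psi' psi].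
Proof.
move=> [[phi1 phiD phiM phiZ [phi' phiK phi'K]] [psiD [psi' psiK psi'K]] phi_homog].
exists phi', psi'; split=> //; split.
- split; last by exists phi.
  + by rewrite -phi1 phiK.
  + by move=> f g; apply: (can_inj phiK); rewrite phiD !phi'K.
  + by move=> f g; apply: (can_inj phiK); rewrite phiM !phi'K.
  + by move=> c f; apply: (can_inj phiK); rewrite phiZ !phi'K.
- split; last by exists psi.
  by move=> x y; apply: (can_inj psiK); rewrite psiD !psi'K.
- move=> w f; split=> [fw | [g [gw <-]]].
    by exists (phi f); rewrite phiK -[w]psi'K; split=> //; apply/phi_homog; exists f.
  have /phi_homog [g' [g'w <-]] : khomog deg (psi (psi' w)) g by rewrite psi'K.
  by rewrite phiK.
Qed.

Lemma graded_aut_gen_ideal phi psi A B : graded_aut deg phi psi ->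
  {homo phi : f / A f >-> B f} -> {homo phi : f / gen_ideal A f >-> gen_ideal B f}.
Proof. by move=> [[_ phiD phiM _ _] _ _] AB f; apply: gen_ideal_morph. Qed.

Lemma graded_aut_homog phi psi w f : graded_aut deg phi psi ->
  khomog deg w f -> khomog deg (psi w) (phi f).
Proof. by move=> [_ _ phi_homog] fw; apply/phi_homog; exists f. Qed.

Lemma graded_aut_wlt phi psi w' w : graded_aut deg phi psi ->
  wlt F deg w' w -> wlt F deg (psi w') (psi w).
Proof.
move=> phi_aut [[h [hh hn]] w'w].
have [[_ phiD _ _ [phi' phiK _]] [psiD [psi' psiK _]] _] := phi_aut.
split; last by move/(can_inj psiK).
exists (phi h); split.
  by rewrite -(additive_funN psiD) -psiD; apply: graded_aut_homog phi_aut hh.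
apply: contra hn => /eqP phih0; apply/eqP.
by rewrite -(phiK h) phih0 -{1}(additive_fun0 phiD) phiK.
Qed.

Lemma graded_aut_Ilt phi psi I w f : graded_aut deg phi psi ->
  {homo phi : g / I g} -> Ilt deg I w f -> Ilt deg I (psi w) (phi f).
Proof.
move=> phi_aut phiI; apply: graded_aut_gen_ideal (phi_aut) _ f => g [w' [w'w [Ig gw']]].
exists (psi w'); split; first exact: graded_aut_wlt phi_aut w'w.
by split; [apply: phiI | apply: graded_aut_homog phi_aut gw'].
Qed.

Section StableIdeal.
Variables (I : {mpoly F[r]} -> Prop) (phi phi' : {mpoly F[r]} -> {mpoly F[r]}).
Variables (psi psi' : K -> K).
Hypotheses (phi_aut : graded_aut deg phi psi) (phi'_aut : graded_aut deg phi' psi').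
Hypotheses (phiK : cancel phi phi') (psiK : cancel psi psi').
Hypotheses (phiI : {homo phi : f / I f}) (phi'I : {homo phi' : f / I f}).

(* [phi f] in [I_{<psi u}] would give [f = phi' (phi f)] in [I_{<u}]. *)
Lemma graded_aut_OmegaI u : OmegaI deg I u -> OmegaI deg I (psi u).
Proof.
move=> [f [[If fu] f_nlt]]; exists (phi f); split.
  by split; [apply: phiI | apply: graded_aut_homog phi_aut fu].
by move/(graded_aut_Ilt phi'_aut phi'I); rewrite phiK psiK.
Qed.

Lemma graded_aut_IW : {homo phi : f / IW deg I f}.
Proof.
have [[_ phiD _ _ _] _ _] := phi_aut.
move=> f [If [s [sW fs]]]; split; first exact: phiI.
exists [seq phi g | g <- s]; split; last first.
  by rewrite fs big_map (big_morph phi phiD (additive_fun0 phiD)).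
  move=> _ /mapP [g gs ->]; have [u [Ou gu]] := sW g gs.
by exists (psi u); split; [apply: graded_aut_OmegaI | apply: graded_aut_homog phi_aut gu].
Qed.

End StableIdeal.

End GradedAutomorphisms.

Unset Implicit Arguments. Set Strict Implicit.

Theorem proposition2p8 (F : closedFieldType) (K : zmodType) (r : nat) (deg : 'I_r -> K)
  (I : {mpoly F[r]} -> Prop) :
  [pchar F] =i pred0 ->
  fg_group K ->
  is_prime_ideal I ->
  homog_ideal deg I ->
  effective_pointed deg I ->
  (forall f, I f -> in_irrel_sq f) ->
  (forall f, I f <-> gen_ideal (IW deg I) f) /\
  (forall (phi : {mpoly F[r]} -> {mpoly F[r]}) (psi : K -> K),
     graded_aut deg phi psi ->
     (stabilizes phi I <-> stabilizes phi (IW deg I))).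
Proof.
move=> _ _ Iprime Ihomog Ieff Iirrel.
have Iideal : is_ideal I by case: Iprime.
have kdeg_fiber := kdeg_fiber_bounded (pointed_kdeg_eq0 Iprime Ieff Iirrel).
have I_gen_IW := gen_IW Iideal Ihomog kdeg_fiber.
split=> // phi psi phi_aut.
have [phi' [psi' [phi'_aut phiK phi'K psiK psi'K]]] := graded_aut_inv phi_aut.
rewrite !(stabilizes_homo _ phiK phi'K).
split=> [[phiI phi'I] | [phiIW phi'IW]]; split.
- exact: graded_aut_IW phi_aut phi'_aut phiK psiK phiI phi'I.
- exact: graded_aut_IW phi'_aut phi_aut phi'K psi'K phi'I phiI.
- by move=> f /I_gen_IW If; apply/I_gen_IW; apply: graded_aut_gen_ideal phi_aut phiIW f If.
- by move=> f /I_gen_IW If; apply/I_gen_IW; apply: graded_aut_gen_ideal phi'_aut phi'IW f If.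
Qed.
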